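(* Consider a power allocation game (PAG) as described in the context in which no country has friends ($\mathcal F_i=\emptyset$ for all $i$) and the adversary relations form a bipartite graph: there is a partition $\mathbf n=\mathcal L\cup\mathcal R$, $\mathcal L\cap\mathcal R=\emptyset$, such that whenever $j\in\mathcal A_i$, one of $i,j$ lies in $\mathcal L$ and the other in $\mathcal R$. Let $i\in\mathbf n$. If there exists a Nash equilibrium $U^*\in\mathcal U^*$ with $\sigma_i(U^* )>\tau_i(U^* )$ (country $i$ is safe), then for every $j\in\mathcal A_i$, $$p_j\ \le\ \sum_{k\in\mathcal A_j}p_k .$$
   Context: Power allocation game (PAG). There are $n$ countries labelled by $\mathbf n=\{1,\dots,n\}$; country $i$ has total power $p_i\ge 0$. Each country $i$ has a set of friends $\mathcal F_i\subseteq\mathbf n$ and a set of adversaries $\mathcal A_i\subseteq\mathbf n$; the sets $\{i\}$, $\mathcal F_i$, $\mathcal A_i$ are pairwise disjoint, and the relations are symmetric ($j\in\mathcal F_i\iff i\in\mathcal F_j$, $j\in\mathcal A_i\iff i\in\mathcal A_j$). An admissible power allocation matrix is a real $n\times n$ matrix $U=[u_{ij}]$ with $u_{ij}\ge0$, $u_{ij}=0$ whenever $j\notin\{i\}\cup\mathcal F_i\cup\mathcal A_i$, and $\sum_{j=1}^n u_{ij}=p_i$ for every $i$. Row $i$ is country $i$'s strategy: $u_{ii}$ is power kept in reserve, $u_{ij}$ ($j\in\mathcal F_i$) is support given to friend $j$, $u_{ij}$ ($j\in\mathcal A_i$) is offense against adversary $j$. $\mathcal U$ is the set of admissible matrices.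 The support of $i$ is $\sigma_i(U)=u_{ii}+\sum_{j\in\mathcal F_i}u_{ji}+\sum_{j\in\mathcal A_i}u_{ij}$ and the threat to $i$ is $\tau_i(U)=\sum_{j\in\mathcal A_i}u_{ji}$. The state $x_i(U)$ is ''safe'' if $\sigma_i(U)>\tau_i(U)$, ''precarious'' if $\sigma_i(U)=\tau_i(U)$, ''unsafe'' if $\sigma_i(U)<\tau_i(U)$; country $i$ survives at $U$ if it is safe or precarious. Preferences. For $U,V\in\mathcal U$, country $i$ weakly prefers $V$ to $U$ (written $U\preceq_i V$) iff (a) for all $j\in\{i\}\cup\mathcal F_i$: $x_j(V)\in\{\text{safe},\text{precarious}\}$ or $x_j(U)=\text{unsafe}$; and (b) for all $j\in\mathcal A_i$: $x_j(V)\in\{\text{unsafe},\text{precarious}\}$ or $x_j(U)=\text{safe}$. Country $i$ strictly prefers $V$ to $U$ (written $U\prec_i V$) iff either $i$ survives at $V$ and is unsafe at $U$ (priority of self-survival), or $U\preceq_i V$ holds and $V\preceq_i U$ fails. Nash equilibrium. $U^*\in\mathcal U$ is a (pure strategy) Nash equilibrium if no country has a profitable unilateral deviation: for every $i\in\mathbf n$ and every $V\in\mathcal U$ differing from $U^*$ only in row $i$, it is not the case that $U^*\prec_i V$. $\mathcal U^*$ denotes the set of Nash equilibria. *)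

From HB Require Import structures.
From mathcomp Require Import all_boot all_order all_algebra.
Set Implicit Arguments. Unset Strict Implicit. Unset Printing Implicit Defensive.
Import Order.TTheory GRing.Theory Num.Theory.
Local Open Scope ring_scope.

Section PAG.
Variables (R : realFieldType) (n : nat).
Variables (p : 'I_n -> R) (F A : rel 'I_n).

Definition wf_game : Prop :=
  [/\ forall i, ~~ F i i,
      forall i, ~~ A i i,
      forall i j, ~~ (F i j && A i j),
      forall i j, F i j = F j i
    & forall i j, A i j = A j i].

Definition admissible (U : 'M[R]_n) : Prop :=
  [/\ forall i j, 0 <= U i j,
      forall i j, ~~ [|| j == i, F i j | A i j] -> U i j = 0
    & forall i, \sum_(j < n) U i j = p i].

Definition sigma (U : 'M[R]_n) (i : 'I_n) : R :=
  U i i + \sum_(j < n | F i j) U j i + \sum_(j < n | A i j) U i j.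

Definition tau (U : 'M[R]_n) (i : 'I_n) : R :=
  \sum_(j < n | A i j) U j i.

Definition safe (U : 'M[R]_n) i : Prop := tau U i < sigma U i.
Definition precarious (U : 'M[R]_n) i : Prop := sigma U i = tau U i.
Definition unsafe (U : 'M[R]_n) i : Prop := sigma U i < tau U i.
Definition survives (U : 'M[R]_n) i : Prop := safe U i \/ precarious U i.

Definition weak_pref (i : 'I_n) (U V : 'M[R]_n) : Prop :=
  (forall j, (j == i) || F i j -> survives V j \/ unsafe U j) /\
  (forall j, A i j -> (unsafe V j \/ precarious V j) \/ safe U j).

Definition strict_pref (i : 'I_n) (U V : 'M[R]_n) : Prop :=
  (survives V i /\ unsafe U i) \/ (weak_pref i U V /\ ~ weak_pref i V U).

Definition nash (U : 'M[R]_n) : Prop :=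
  admissible U /\
  forall (i : 'I_n) (V : 'M[R]_n), admissible V ->
    (forall k j, k != i -> V k j = U k j) -> ~ strict_pref i U V.

End PAG.

(* Without friends the support of a country is its whole power, so sigma_k = p_k
   at every admissible allocation.  Suppose i is safe at a Nash equilibrium U,
   j is an adversary of i and p_j > sum_{k in A_j} p_k.  Let j deviate: it keeps
   attacking every other adversary k with min(U_jk, p_k) and throws all the rest
   of its power at i.  That rest exceeds p_i, so i becomes unsafe; the threat on
   j is at most sum_{k in A_j} p_k < p_j, so j stays safe; and an adversary k
   that was not safe already faced a threat >= p_k, which the capped attack
   preserves.  Hence j strictly prefers the deviation, contradicting Nash. *)
From HB Require Import structures.
From mathcomp Require Import all_boot all_order all_algebra.
From mathcomp Require Import lra.
Set Implicit Arguments. Unset Strict Implicit. Unset Printing Implicit Defensive.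
Import Order.TTheory GRing.Theory Num.Theory.
Local Open Scope ring_scope.

Section NoFriends.
Variables (R : realFieldType) (n : nat) (p : 'I_n -> R) (F A : rel 'I_n).
Hypothesis wf : wf_game F A.
Hypothesis no_friends : forall a b, ~~ F a b.
Hypothesis p_ge0 : forall a, 0 <= p a.

Lemma strict_pref_by_defeat (U V : 'M[R]_n) j i :
  survives F A V j -> (forall k, A j k -> safe F A V k -> safe F A U k) ->
  A j i -> safe F A U i -> ~ safe F A V i -> strict_pref F A j U V.
Proof.
move=> survj noworse Aji safeUi unsafeVi; right; split.
  split=> [k /orP[/eqP -> | Fjk] | k Ajk]; first by left.
    by rewrite (negbTE (no_friends _ _)) in Fjk.
  have [safeUk | notsafeUk] := boolP (tau A U k < sigma F A U k); first by right.
  left; have /negP : ~ safe F A V k by move=> /(noworse _ Ajk); apply/negP.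
  rewrite /unsafe /precarious -leNgt le_eqVlt => /orP[/eqP ->|]; [by right | by left].
case=> _ /(_ i Aji) [[|] | //]; rewrite /unsafe /precarious /safe in safeUi *.
  by move=> /(lt_trans safeUi); rewrite ltxx.
by move=> eqUi; move: safeUi; rewrite eqUi ltxx.
Qed.

Lemma sigma_admissible (U : 'M[R]_n) k : admissible p F A U -> sigma F A U k = p k.
Proof.
case: wf => [_ irrA _ _ _] [_ Uoff Usum].
have nofriend_support : \sum_(l < n | F k l) U l k = 0.
  by rewrite big_pred0 // => l; rewrite (negbTE (no_friends _ _)).
rewrite /sigma nofriend_support addr0 -Usum [RHS](bigD1 k) //=; congr (_ + _).
rewrite [RHS](bigID (A k)) /= [X in _ + X]big1 ?addr0 => [|l /andP[lk nAkl]].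
  by apply: eq_bigl => l; case: (eqVneq l k) => [->|//]; rewrite (negbTE (irrA k)).
by apply: Uoff; rewrite (negbTE lk) (negbTE nAkl) (negbTE (no_friends _ _)).
Qed.

Lemma entry_le_power (U : 'M[R]_n) a b : admissible p F A U -> U a b <= p a.
Proof. by case=> U_ge0 _ Usum; rewrite -Usum (bigD1 b) //= lerDl sumr_ge0. Qed.

Lemma entry_le_tau (U : 'M[R]_n) k l :
  admissible p F A U -> A k l -> U l k <= tau A U k.
Proof. by case=> U_ge0 _ _ Akl; rewrite /tau (bigD1 l) //= lerDl sumr_ge0. Qed.

Lemma tau_le_adversary_power (U : 'M[R]_n) k :
  admissible p F A U -> tau A U k <= \sum_(l < n | A k l) p l.
Proof. by move=> Uadm; apply: ler_sum => l _; apply: entry_le_power. Qed.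

Definition retarget (U : 'M[R]_n) (j i : 'I_n) : 'M[R]_n :=
  \matrix_(a, b)
    if a != j then U a b
    else if b == i then p j - \sum_(c < n | (c != i) && A j c) Num.min (U j c) (p c)
    else if A j b then Num.min (U j b) (p b) else 0.

Lemma retarget_target_ge (U : 'M[R]_n) j i : A j i ->
  p i + (p j - \sum_(k < n | A j k) p k) <= retarget U j i j i.
Proof.
move=> Aji; rewrite mxE eqxx eqxx /= (bigD1 i Aji) /=.
have capped_le : \sum_(c < n | (c != i) && A j c) Num.min (U j c) (p c)
    <= \sum_(c < n | A j c && (c != i)) p c.
  rewrite (eq_bigl _ _ (fun c => andbC _ _)).
  by apply: ler_sum => c _; rewrite ge_min lexx orbT.
lra.
Qed.

Lemma admissible_retarget (U : 'M[R]_n) j i :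
  admissible p F A U -> A j i -> \sum_(k < n | A j k) p k <= p j ->
  admissible p F A (retarget U j i).
Proof.
move=> Uadm Aji sumle; have [U_ge0 Uoff Usum] := Uadm.
have r_ge0 : 0 <= retarget U j i j i.
  apply: (le_trans _ (retarget_target_ge U Aji)); by rewrite addr_ge0 ?subr_ge0.
split=> [a b | a b | a].
- have [->|aj] := eqVneq a j; last by rewrite mxE aj.
  have [->|bi] := eqVneq b i; first exact: r_ge0.
  by rewrite mxE eqxx (negbTE bi) /=; case: ifP => // _; rewrite le_min U_ge0 p_ge0.
- rewrite mxE; case: (eqVneq a j) => [->|aj] /=; last exact: Uoff.
  by case: (eqVneq b i) => [->|_]; [rewrite Aji !orbT | case: (A j b); rewrite ?orbT].
- have [->|aj] := eqVneq a j; last first.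
    by rewrite -Usum; apply: eq_bigr => b _; rewrite mxE aj.
  have row_j b : b != i ->
      retarget U j i j b = if A j b then Num.min (U j b) (p b) else 0.
    by move=> bi; rewrite mxE eqxx (negbTE bi).
  by rewrite (bigD1 i) //= (eq_bigr _ row_j) mxE eqxx eqxx /= big_mkcondr subrK.
Qed.

Lemma retarget_keeps_threat (U : 'M[R]_n) j i k :
  admissible p F A (retarget U j i) -> A j k -> k != i ->
  p k <= tau A U k -> p k <= tau A (retarget U j i) k.
Proof.
case: wf => [_ _ _ _ symA] Vadm Ajk ki pk_le.
have [Ujk_le | pk_lt] := leP (U j k) (p k).
  suff -> : tau A (retarget U j i) k = tau A U k by [].
  apply: eq_bigr => l _; rewrite mxE; case: (eqVneq l j) => [->|//].
  by rewrite /= (negbTE ki) Ajk min_l.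
have Akj : A k j by rewrite symA.
apply: (le_trans _ (entry_le_tau Vadm Akj)).
by rewrite mxE eqxx /= (negbTE ki) Ajk min_r // ltW.
Qed.

End NoFriends.

Theorem theorem4 (R : realFieldType) (n : nat) (p : 'I_n -> R)
    (F A : rel 'I_n) :
  wf_game F A ->
  (forall i, 0 <= p i) ->
  (forall i j, ~~ F i j) ->
  (exists L : {set 'I_n}, forall i j, A i j -> (i \in L) != (j \in L)) ->
  forall i : 'I_n,
    (exists U : 'M[R]_n, nash p F A U /\ safe F A U i) ->
    forall j : 'I_n, A i j -> p j <= \sum_(k < n | A j k) p k.
Proof.
move=> wf p_ge0 no_friends _ i [U [[Uadm Unash] safeUi]] j Aij.
have [_ _ _ _ symA] := wf; have Aji : A j i by rewrite symA.
rewrite leNgt; apply/negP => sum_lt; set V := retarget p A U j i.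
have Vadm : admissible p F A V by apply: admissible_retarget => //; apply: ltW.
have sigU k : sigma F A U k = p k by apply: sigma_admissible.
have sigV k : sigma F A V k = p k by apply: sigma_admissible.
have unsafeVi : ~ safe F A V i.
  have threat_gt : p i < tau A V i.
    apply: (lt_le_trans _ (entry_le_tau Vadm Aij)).
    by apply: (lt_le_trans _ (retarget_target_ge p U Aji)); rewrite ltrDl subr_gt0.
  by rewrite /safe sigV => /(lt_trans threat_gt); rewrite ltxx.
apply: (Unash j V Vadm) => [k b kj | ]; first by rewrite mxE kj.
apply: (strict_pref_by_defeat no_friends _ _ Aji safeUi unsafeVi).
  left; rewrite /safe sigV; apply: (le_lt_trans _ sum_lt).
  exact: tau_le_adversary_power Vadm.
move=> k Ajk safeVk; have [->|ki] := eqVneq k i; first by [].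
rewrite /safe sigU ltNge; apply/negP => pk_le.
have := retarget_keeps_threat wf Vadm Ajk ki pk_le.
by rewrite leNgt -sigV safeVk.
Qed.
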